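(* Given the values of two fields, say $u$ and $v$, in three points $\mathfrak{z}_0$, $\mathfrak{z}_1=\mathfrak{z}_0+1$ and $\mathfrak{z}_2=\mathfrak{z}_0+\omega$, the equations of the $fgh$--system determine uniquely the values of $u$ and $v$ in the point $\mathfrak{z}_3=\mathfrak{z}_0+1+\omega$: \begin{equation} u_3-u_0=(u_1-u_0)\frac{v_1-v_0}{v_1-v_2}+(u_2-u_0)\frac{v_2-v_0}{v_2-v_1}, \end{equation} \begin{equation} v_3-v_1=(v_1-v_0)\frac{u_1-u_0}{u_0-u_3}\quad \Leftrightarrow\quad v_3-v_2=(v_2-v_0)\frac{u_2-u_0}{u_0-u_3}. \end{equation}
   Context: On the regular triangular lattice with vertices $k+\ell\omega+m\omega^2$ ($\omega=e^{2\pi i/3}$), the $fgh$--system for functions $u,v$ on the vertices (with $f=u(\mathfrak{z}_2)-u(\mathfrak{z}_1)$, $g=v(\mathfrak{z}_2)-v(\mathfrak{z}_1)$ on each positively oriented edge $(\mathfrak{z}_1,\mathfrak{z}_2)$, i.e. $\mathfrak{z}_2-\mathfrak{z}_1\in\{1,\omega,\omega^2\}$) amounts to the equation \[ \frac{u(\mathfrak{z}_2)-u(\mathfrak{z}_1)}{u(\mathfrak{z}_3)-u(\mathfrak{z}_2)}=\frac{v(\mathfrak{z}_3)-v(\mathfrak{z}_2)}{v(\mathfrak{z}_1)-v(\mathfrak{z}_3)} \] for every elementary triangle whose consecutive vertices $\mathfrak{z}_1,\mathfrak{z}_2,\mathfrak{z}_3$ satisfy $\mathfrak{z}_2-\mathfrak{z}_1,\mathfrak{z}_3-\mathfrak{z}_2,\mathfrak{z}_1-\mathfrak{z}_3\in\{1,\omega,\omega^2\}$.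 Notation $u_j=u(\mathfrak{z}_j)$, $v_j=v(\mathfrak{z}_j)$. *)

From HB Require Import structures.
From mathcomp Require Import all_boot all_order all_algebra.
From mathcomp Require Import ring.
Set Implicit Arguments. Unset Strict Implicit. Unset Printing Implicit Defensive.
Import Order.TTheory GRing.Theory Num.Theory.
Local Open Scope ring_scope.

(* Vertices of the regular triangular lattice: the pair (a, b) : int * int
   stands for the complex point a + b*omega.  (Every k + l omega + m omega^2
   equals (k - m) + (l - m) omega since omega^2 = -1 - omega.) *)
Definition lpt := (int * int)%type.
Definition ladd (z w : lpt) : lpt := (z.1 + w.1, z.2 + w.2)%R.
Definition lone : lpt := (1, 0)%R.
Definition lom  : lpt := (0, 1)%R.
Definition lom2 : lpt := (-1, -1)%R. (* the lattice vector omega^2 = -1 - omega *)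

Definition pos_edge (z1 z2 : lpt) : Prop :=
  z2 = ladd z1 lone \/ z2 = ladd z1 lom \/ z2 = ladd z1 lom2.

Definition elem_triangle (z1 z2 z3 : lpt) : Prop :=
  pos_edge z1 z2 /\ pos_edge z2 z3 /\ pos_edge z3 z1.

Definition fgh_eq (F : fieldType) (u v : lpt -> F) (z1 z2 z3 : lpt) : Prop :=
  (u z2 - u z1) / (u z3 - u z2) = (v z3 - v z2) / (v z1 - v z3).

Definition fgh_triangle (F : fieldType) (u v : lpt -> F) (z1 z2 z3 : lpt) : Prop :=
  fgh_eq u v z1 z2 z3 /\ fgh_eq u v z2 z3 z1 /\ fgh_eq u v z3 z1 z2.

Lemma elem_tri_A (z0 : lpt) :
  elem_triangle z0 (ladd z0 lone) (ladd (ladd z0 lone) lom).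
Proof.
case: z0 => a b; rewrite /elem_triangle /pos_edge /ladd /lone /lom /lom2 /=.
split; [left | split; [right; left | right; right]] => //.
by congr pair; rewrite !addr0 -!addrA ?subrr ?addr0 // addrC subrr addr0.
Qed.

Lemma elem_tri_B (z0 : lpt) :
  elem_triangle (ladd z0 lom) (ladd (ladd z0 lone) lom) z0.
Proof.
case: z0 => a b; rewrite /elem_triangle /pos_edge /ladd /lone /lom /lom2 /=.
split; [left | split; [right; right | right; left]]; congr pair; ring.
Qed.

(* On an elementary triangle whose edges are nondegenerate for u and v, the
   three rotations of the fgh-equation cross-multiply to one and the same
   polynomial identity, because the edge differences of u (and of v) around
   the triangle sum to zero.  That identity is affine in the value of v at the
   third vertex, which gives the two formulas for v3 from the triangles
   (z0, z1, z3) and (z0, z2, z3).  Subtracting them eliminates v3 and leaves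
   an affine equation for u3, the formula for u3; conversely that formula
   together with either formula for v3 gives back the other one. *)

From HB Require Import structures.
From mathcomp Require Import all_boot all_order all_algebra.
From mathcomp Require Import ring.
Import Order.TTheory GRing.Theory Num.Theory.
Set Implicit Arguments.
Unset Strict Implicit.
Unset Printing Implicit Defensive.

Local Open Scope ring_scope.

Lemma eq_divr_iff (F : fieldType) (x y d : F) :
  d != 0 -> x = y / d <-> x * d = y.
Proof. by move=> d0; split=> [-> | <-]; [rewrite divfK | rewrite mulfK]. Qed.

Lemma eq_mulr_div_iff (F : fieldType) (x y a d : F) :
  d != 0 -> x = y * (a / d) <-> x * d = y * a.
Proof. by move=> d0; rewrite mulrA; apply: eq_divr_iff. Qed.

Section FghTriangle.

Variables (F : fieldType) (u v : lpt -> F).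

Definition fgh_poly (a b c : lpt) : F :=
  (u b - u a) * (v a - v c) - (v c - v b) * (u c - u b).

Lemma fgh_eqE a b c :
  u c != u b -> v a != v c -> fgh_eq u v a b c <-> fgh_poly a b c = 0.
Proof.
move=> ucb vac; rewrite /fgh_eq /fgh_poly; split=> /eqP.
  by rewrite eqr_div ?subr_eq0 // => /eqP ->; rewrite subrr.
by rewrite subr_eq0 -eqr_div ?subr_eq0 // => /eqP.
Qed.

Lemma fgh_poly_rotate a b c : fgh_poly b c a = fgh_poly a b c.
Proof. by rewrite /fgh_poly; ring. Qed.

Lemma fgh_triangle_rotate a b c :
  fgh_triangle u v b c a <-> fgh_triangle u v a b c.
Proof. by rewrite /fgh_triangle; tauto. Qed.

Variables a b c : lpt.
Hypotheses (uba : u b != u a) (ucb : u c != u b) (uac : u a != u c)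
  (vba : v b != v a) (vcb : v c != v b) (vac : v a != v c).

Lemma fgh_triangleE : fgh_triangle u v a b c <-> fgh_poly a b c = 0.
Proof.
rewrite /fgh_triangle !fgh_eqE // (fgh_poly_rotate c a b) fgh_poly_rotate.
by split=> [[] | h].
Qed.

Lemma fgh_triangle_apex :
  fgh_triangle u v a b c <->
  v c - v b = (v b - v a) * ((u b - u a) / (u a - u c)).
Proof.
rewrite fgh_triangleE (fgh_poly_rotate c a b) eq_mulr_div_iff ?subr_eq0 //.
by rewrite /fgh_poly mulrC; split=> [/subr0_eq | ->]; last exact: subrr.
Qed.

End FghTriangle.

Lemma apex_u_iff (F : fieldType) (u0 u1 u2 u3 v0 v1 v2 v3 : F) :
  u3 != u0 -> v1 != v2 ->
  v3 - v1 = (v1 - v0) * ((u1 - u0) / (u0 - u3)) ->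
  (v3 - v2 = (v2 - v0) * ((u2 - u0) / (u0 - u3)) <->
   u3 - u0 = (u1 - u0) * ((v1 - v0) / (v1 - v2))
             + (u2 - u0) * ((v2 - v0) / (v2 - v1))).
Proof.
move=> u30 v12.
have d03 : u0 - u3 != 0 by rewrite subr_eq0 eq_sym.
have d12 : v1 - v2 != 0 by rewrite subr_eq0.
have d21 : v2 - v1 != 0 by rewrite subr_eq0 eq_sym.
rewrite !eq_mulr_div_iff // => vc1.
have -> : (u1 - u0) * ((v1 - v0) / (v1 - v2)) + (u2 - u0) * ((v2 - v0) / (v2 - v1))
          = ((v1 - v0) * (u1 - u0) - (v2 - v0) * (u2 - u0)) / (v1 - v2).
  by field; rewrite d12 d21.
rewrite eq_divr_iff //.
have -> : (u3 - u0) * (v1 - v2) = (v3 - v1) * (u0 - u3) - (v3 - v2) * (u0 - u3).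
  by ring.
by rewrite vc1; split=> [-> | /subrI].
Qed.

Theorem lemma8 (F : fieldType) (u v : lpt -> F) (z0 : lpt) :
  let z1 := ladd z0 lone in
  let z2 := ladd z0 lom in
  let z3 := ladd (ladd z0 lone) lom in
  let u0 := u z0 in let u1 := u z1 in let u2 := u z2 in let u3 := u z3 in
  let v0 := v z0 in let v1 := v z1 in let v2 := v z2 in let v3 := v z3 in
  u1 != u0 -> u2 != u0 -> u3 != u0 -> u3 != u1 -> u3 != u2 ->
  v1 != v0 -> v2 != v0 -> v3 != v0 -> v3 != v1 -> v3 != v2 ->
  v1 != v2 ->
  ((fgh_triangle u v z0 z1 z3 /\ fgh_triangle u v z2 z3 z0) <->
     (u3 - u0 = (u1 - u0) * ((v1 - v0) / (v1 - v2))
                + (u2 - u0) * ((v2 - v0) / (v2 - v1))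
      /\ v3 - v1 = (v1 - v0) * ((u1 - u0) / (u0 - u3)))) /\
  ((fgh_triangle u v z0 z1 z3 /\ fgh_triangle u v z2 z3 z0) <->
     (u3 - u0 = (u1 - u0) * ((v1 - v0) / (v1 - v2))
                + (u2 - u0) * ((v2 - v0) / (v2 - v1))
      /\ v3 - v2 = (v2 - v0) * ((u2 - u0) / (u0 - u3)))).
Proof.
move=> z1 z2 z3 u0 u1 u2 u3 v0 v1 v2 v3.
move=> u10 u20 u30 u31 u32 v10 v20 v30 v31 v32 v12.
have u03 : u0 != u3 by rewrite eq_sym.
have v03 : v0 != v3 by rewrite eq_sym.
have v21 : v2 != v1 by rewrite eq_sym.
rewrite (fgh_triangle_apex u10 u31 u03 v10 v31 v03).
rewrite fgh_triangle_rotate (fgh_triangle_apex u20 u32 u03 v20 v32 v03).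
have Q_iff_U := @apex_u_iff _ u0 u1 u2 u3 v0 v1 v2 v3 u30 v12.
have P_iff_U := @apex_u_iff _ u0 u2 u1 u3 v0 v2 v1 v3 u30 v21.
split; split.
- by case=> P Q; split=> //; apply/(Q_iff_U P).
- by case=> U P; split=> //; apply/(Q_iff_U P).
- by case=> P Q; split=> //; rewrite [RHS]addrC; apply/(P_iff_U Q).
- by case=> U Q; split=> //; apply/(P_iff_U Q); rewrite [RHS]addrC.
Qed.
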